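(* For a set of languages $\mathcal{R}$ let $\dot{\mathcal{R}}^\star=\{L^\star\mid L\in\mathcal{R}\}$. (1) There exists a rational set of regular languages $\mathcal{R}$ such that $\dot{\mathcal{R}}^\star$ is not a rational set of regular languages. (2) If $\mathcal{R}$ is a finite rational set of regular languages, then $\dot{\mathcal{R}}^\star$ is a finite rational set of regular languages. (3) Expressing $\dot{\mathcal{R}}^\star$ in the finite case in general requires a new language substitution: there exist an alphabet $\Delta$, a regular language substitution $\varphi:\Delta\to2^{\Sigma^*}$ and a regular $K\subseteq\Delta^+$ with $\mathcal{R}=(K,\varphi)$ finite, such that there is no regular $K'\subseteq\Delta^+$ with $\dot{\mathcal{R}}^\star=(K',\varphi)$.
   Context: Alphabets are nonempty finite sets. A regular language substitution $\varphi:\Delta\to2^{\Sigma^*}$ maps each symbol to a regular language over $\Sigma$, extended by $\varphi(\delta w)=\varphi(\delta)\varphi(w)$. A set $\mathcal{R}$ of regular languages over $\Sigma$ is a rational set of regular languages, written $\mathcal{R}=(K,\varphi)$, if there are an alphabet $\Delta$, a regular $K\subseteq\Delta^+$ and a regular language substitution $\varphi$ with $\mathcal{R}=\{\varphi(w)\mid w\in K\}$. *)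

From mathcomp Require Import all_boot.
Set Implicit Arguments. Unset Strict Implicit. Unset Printing Implicit Defensive.

Definition lang (Sigma : finType) := seq Sigma -> Prop.

Definition alphabet (Sigma : finType) : Prop := 0 < #|Sigma|.

Definition regular (Sigma : finType) (L : lang Sigma) : Prop :=
  exists (Q : finType) (q0 : Q) (d : Q -> Sigma -> Q) (F : pred Q),
    forall w, L w <-> F (foldl d q0 w).

Definition eps_lang (Sigma : finType) : lang Sigma := fun w => w = [::].

Definition conc (Sigma : finType) (A B : lang Sigma) : lang Sigma :=
  fun w => exists u v, w = u ++ v /\ A u /\ B v.

Definition star (Sigma : finType) (L : lang Sigma) : lang Sigma :=
  fun w => exists ws : seq (seq Sigma), w = flatten ws /\ forall u, u \in ws -> L u.

Definition subst (Delta Sigma : finType) (phi : Delta -> lang Sigma)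
  (w : seq Delta) : lang Sigma :=
  foldr (fun d L => conc (phi d) L) (@eps_lang Sigma) w.

Definition regular_subst (Delta Sigma : finType) (phi : Delta -> lang Sigma) : Prop :=
  forall d, regular (phi d).

Definition nonempty_words (Delta : finType) (K : lang Delta) : Prop :=
  forall w, K w -> w <> [::].

Definition langset (Sigma : finType) := lang Sigma -> Prop.

Definition ratset (Delta Sigma : finType) (K : lang Delta) (phi : Delta -> lang Sigma)
  : langset Sigma :=
  fun L => exists w, K w /\ L = subst phi w.

Definition rational_set (Sigma : finType) (R : langset Sigma) : Prop :=
  exists (Delta : finType) (K : lang Delta) (phi : Delta -> lang Sigma),
    alphabet Delta /\ regular K /\ nonempty_words K /\ regular_subst phi /\
    forall L, R L <-> ratset K phi L.

Definition finite_langset (Sigma : finType) (R : langset Sigma) : Prop :=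
  exists (n : nat) (f : 'I_n -> lang Sigma), forall L, R L <-> exists i, L = f i.

Definition star_set (Sigma : finType) (R : langset Sigma) : langset Sigma :=
  fun L => exists L0, R L0 /\ L = star L0.

From mathcomp Require Import all_boot.
From Stdlib Require Import Classical ClassicalEpsilon FunctionalExtensionality PropExtensionality.
Set Implicit Arguments. Unset Strict Implicit. Unset Printing Implicit Defensive.

(* (1) Over a one-letter alphabet, R = { {a^n} | n >= 1 } is rational with phi(d) = {a}.  If
   some phi' presents (a^n)^* as phi'(w), then the empty word lies in every phi'(d) with d in w,
   so phi'(w) contains each such phi'(d), one of which has a nonempty word; the shortest
   nonempty words of the phi'(d) have length bounded independently of w, contradicting n large.
   (2) A finite set {L_1, ..., L_n} of regular languages is rational, via the one-letter words
   i |-> L_i, so this applies to {L_1^*, ..., L_n^*}.  (3) With phi(a) = {a} and K = {a}, every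
   phi(w) is {a^|w|}, never a^*. *)

Section Languages.
Variable S : finType.
Implicit Types (A B L : lang S) (w u v x : seq S).

Lemma regular_ext A B : regular A -> (forall w, A w <-> B w) -> regular B.
Proof. by case=> Q [q0 [d [F HA]]] AB; exists Q, q0, d, F => w; rewrite -AB. Qed.

(* A language in a finite family closed under left quotients is regular: the members of the
   family are the states, and a state is final iff its language contains the empty word. *)
Lemma regular_of_quotient_family (Q : finType) (g : Q -> lang S) (step : Q -> S -> Q) q0 L :
  (forall q a w, g (step q a) w <-> g q (a :: w)) -> (forall w, L w <-> g q0 w) -> regular L.
Proof.
move=> g_step Lg.
pose F : pred Q := fun q => if excluded_middle_informative (g q [::]) then true else false.
exists Q, q0, step, F => w; rewrite Lg.
elim: w q0 {Lg} => [|a w IHw] q /=; last by rewrite -g_step; apply: IHw.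
by rewrite /F; case: excluded_middle_informative.
Qed.

Lemma regular_eps : regular (@eps_lang S).
Proof.
exists bool, true, (fun _ _ => false), id => w.
have rej w' : foldl (fun _ _ => false) false w' = false by elim: w'.
by rewrite /eps_lang; case: w => [|a w] //=; rewrite rej.
Qed.

Lemma regular_letter_in (P : pred S) : regular (fun w => exists2 a, P a & w = [:: a]).
Proof.
pose step (q : option bool) a := if q is None then Some (P a) else Some false.
exists (option bool), None, step, (pred1 (Some true)) => w.
have rej w' : foldl step (Some false) w' = Some false by elim: w'.
case: w => [|a [|b w]] /=; rewrite ?rej; split=> //.
- by case.
- by case=> a0 Pa [->]; rewrite /= Pa.
- by move=> /eqP [Pa]; exists a.
- by case.
Qed.

Lemma conc_monol A A' B w : (forall u, A u -> A' u) -> conc A B w -> conc A' B w.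
Proof. by move=> AA' [u [v [-> [Au Bv]]]]; exists u, v; split=> //; split=> //; apply: AA'. Qed.

Lemma conc_nil A B : conc A B [::] -> A [::] /\ B [::].
Proof. by case=> [[|? ?] [[|? ?] [//= _ ?]]]. Qed.

Lemma conc_cons A B a w :
  conc A B (a :: w) <-> (A [::] /\ B (a :: w)) \/ conc (fun u => A (a :: u)) B w.
Proof.
split.
- case=> [[|b u] [v [E [Au Bv]]]]; first by left; rewrite E.
  by case: E => -> ->; right; exists u, v.
- case=> [[A0 Baw]|[u [v [-> [Au Bv]]]]]; first by exists [::], (a :: w).
  by exists (a :: u), v.
Qed.

Lemma conc_eps A : conc A (@eps_lang S) = A.
Proof.
apply: functional_extensionality => w; apply: propositional_extensionality; split.
- by case=> u [v [-> [Au ->]]]; rewrite cats0.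
- by move=> Aw; exists w, [::]; rewrite cats0.
Qed.

Lemma star_nil L : star L [::].
Proof. by exists [::]. Qed.

Lemma star_unfold L w : star L w <-> w = [::] \/ conc L (star L) w.
Proof.
split.
- case=> [[|u ws] [-> Lws]]; first by left.
  right; exists u, (flatten ws); split=> //; split; first by apply: Lws; rewrite mem_head.
  by exists ws; split=> // x xws; apply: Lws; rewrite in_cons xws orbT.
- case=> [->|[u [v [-> [Lu [ws [-> Lws]]]]]]]; first exact: star_nil.
  by exists (u :: ws); split=> // x; rewrite in_cons => /predU1P [->|]; auto.
Qed.

Lemma star_cons L a w : star L (a :: w) <-> conc (fun u => L (a :: u)) (star L) w.
Proof.
split.
- case=> ws [E Lws]; elim: ws E Lws => [|[|b u] ws IHws] //= E Lws.
  + by apply: IHws => // x xws; apply: Lws; rewrite in_cons xws orbT.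
  + case: E => -> ->; exists u, (flatten ws); split=> //; split; first by apply: Lws; rewrite mem_head.
    by exists ws; split=> // x xws; apply: Lws; rewrite in_cons xws orbT.
- case=> u [v [-> [Lu [ws [-> Lws]]]]].
  by exists ((a :: u) :: ws); split=> // x; rewrite in_cons => /predU1P [->|]; auto.
Qed.

(* States of the quotient family: a state of A's automaton, still reading the A-part, together
   with the set of states of B's automaton reached by having already switched to B. *)
Lemma regular_conc A B : regular A -> regular B -> regular (conc A B).
Proof.
case=> [QA [qA [dA [FA HA]]]] [QB [qB [dB [FB HB]]]].
pose gA q w : Prop := FA (foldl dA q w).
pose gB q w : Prop := FB (foldl dB q w).
pose g (st : QA * {set QB}) w := conc (gA st.1) B w \/ exists2 s, s \in st.2 & gB s w.
pose step (st : QA * {set QB}) a := (dA st.1 a, [set dB s a | s in st.2] :|: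
       (if FA st.1 then [set dB qB a] else set0)).
apply: (@regular_of_quotient_family _ g step (qA, set0)).
- move=> [p T] a w; rewrite /g /step /=; split.
  + case=> [c|[s]]; first by left; apply/conc_cons; right.
    rewrite inE => /orP [/imsetP [s' s'T ->] Bs|]; first by right; exists s'.
    case: ifP => FAp; last by rewrite inE.
    by rewrite inE => /eqP -> Bs; left; apply/conc_cons; left; split=> //; apply/HB.
  + case=> [/conc_cons [[Ap Baw]|c]|[s sT Bs]]; last 2 first.
    * by left.
    * by right; exists (dB s a) => //; rewrite inE; apply/orP; left; apply/imsetP; exists s.
    right; exists (dB qB a); last exact: (proj1 (HB _) Baw).
    by rewrite inE; apply/orP; right; rewrite /gA /= in Ap; rewrite Ap inE.
- move=> w; rewrite /g /=; split=> [c|[c|[s]]]; last by rewrite inE.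
  + by left; apply: conc_monol c => u /HA.
  + by apply: conc_monol c => u /HA.
Qed.

(* States: whether nothing has been read yet, and the set of states of L's automaton in which a
   current factor of the star may be. *)
Lemma regular_star L : regular L -> regular (star L).
Proof.
case=> [Q [q0 [d [F HL]]]].
pose gL q w : Prop := F (foldl d q w).
pose g (st : bool * {set Q}) w :=
  (st.1 /\ w = [::]) \/ exists2 s, s \in st.2 & conc (gL s) (star L) w.
pose step (st : bool * {set Q}) a := (false, [set d s a | s in st.2] :|:
       (if [exists s in st.2, F s] then [set d q0 a] else set0)).
have star_step a w : star L (a :: w) <-> conc (gL (d q0 a)) (star L) w.
  by rewrite star_cons; split; apply: conc_monol => u; rewrite HL.
apply: (@regular_of_quotient_family _ g step (true, [set q0])).
- move=> [b T] a w; rewrite /g /step /=; split.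
  + case=> [[]//|[s]].
    rewrite inE => /orP [/imsetP [s' s'T ->] c|].
      by right; exists s' => //; apply/conc_cons; right.
    case: ifP => [/existsP [s' /andP [s'T Fs']]|_]; last by rewrite inE.
    by rewrite inE => /eqP -> c; right; exists s' => //; apply/conc_cons; left; split=> //; apply/star_step.
  + case=> [[_ //]|[s sT /conc_cons [[Fs st]|c]]].
    * right; exists (d q0 a); last by apply/star_step.
      have -> : [exists s0 in T, F s0] by apply/existsP; exists s; rewrite sT.
      by rewrite !inE eqxx orbT.
    * by right; exists (d s a) => //; rewrite inE; apply/orP; left; apply/imsetP; exists s.
- move=> w; rewrite /g /= star_unfold; split.
  + case=> [->|c]; first by left.
    by right; exists q0; rewrite ?inE //; apply: conc_monol c => u /HL.
  + case=> [[_ ->]|[s]]; first by left.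
    by rewrite inE => /eqP -> c; right; apply: conc_monol c => u /HL.
Qed.

End Languages.

Section Substitution.
Variables (D S : finType) (phi : D -> lang S).

Lemma regular_subst_word w : regular_subst phi -> regular (subst phi w).
Proof.
move=> reg_phi; elim: w => [|d w IHw] /=; first exact: regular_eps.
exact: regular_conc.
Qed.

Lemma subst_eps_sub w d x : subst phi w [::] -> d \in w -> phi d x -> subst phi w x.
Proof.
elim: w => [|e w IHw] //= ew0; have [phi_e0 w0] := conc_nil ew0.
rewrite in_cons => /predU1P [-> phi_dx|dw phi_dx].
- by exists x, [::]; rewrite cats0.
- by exists [::], x; split=> //; split=> //; apply: IHw.
Qed.

Lemma subst_nonempty_letter w x :
  subst phi w x -> x <> [::] -> exists2 d, d \in w & exists2 u, phi d u & u <> [::].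
Proof.
elim: w x => [|e w IHw] x /=; first by move->.
case=> u [v [-> [phi_eu wv]]] uv_n0.
have [u0|u_n0] := eqVneq u [::]; last by exists e; rewrite ?mem_head //; exists u => //; apply/eqP.
rewrite u0 in uv_n0; have [d dw du] := IHw v wv uv_n0.
by exists d => //; rewrite in_cons dw orbT.
Qed.

Lemma short_nonempty_word_bound :
  exists n, forall d, (exists2 u, phi d u & u <> [::]) ->
    exists u, [/\ phi d u, u <> [::] & size u <= n].
Proof.
suff [n Hn] : exists n, forall d, d \in enum D -> (exists2 u, phi d u & u <> [::]) ->
    exists u, [/\ phi d u, u <> [::] & size u <= n].
  by exists n => d; apply: Hn; rewrite mem_enum.
elim: (enum D) => [|e s [n Hn]]; first by exists 0.
have [[u0 phi_u0 u0_n0]|no_e] := classic (exists2 u, phi e u & u <> [::]).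
- exists (maxn n (size u0)) => d; rewrite in_cons => /predU1P [->|ds] du.
  + by exists u0; split=> //; rewrite leq_max leqnn orbT.
  + by have [u [phi_u u_n0 su]] := Hn d ds du; exists u; split=> //; rewrite leq_max su.
- by exists n => d; rewrite in_cons => /predU1P [->|]; [|apply: Hn].
Qed.

Lemma subst_eps_short_word :
  exists n, forall w x, subst phi w [::] -> subst phi w x -> x <> [::] ->
    exists y, [/\ subst phi w y, y <> [::] & size y <= n].
Proof.
have [n Hn] := short_nonempty_word_bound.
exists n => w x w0 wx x_n0.
have [d dw du] := subst_nonempty_letter wx x_n0.
have [y [phi_y y_n0 sy]] := Hn d du.
by exists y; split=> //; apply: subst_eps_sub phi_y.
Qed.

End Substitution.

Section FiniteRational.
Variable S : finType.

Lemma rational_set_regular (R : langset S) L : rational_set R -> R L -> regular L.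
Proof. by case=> D [K [phi [_ [_ [_ [reg_phi HR]]]]]] /HR [w [_ ->]]; apply: regular_subst_word. Qed.

Lemma rational_set_finite_regular n (f : 'I_n -> lang S) :
  (forall i, regular (f i)) -> rational_set (fun L => exists i, L = f i).
Proof.
move=> reg_f.
(* [None] only keeps the alphabet nonempty when [n = 0]; it does not occur in K. *)
pose phi (o : option 'I_n) : lang S := if o is Some i then f i else @eps_lang S.
exists (option 'I_n), (fun w => exists2 o : option 'I_n, isSome o & w = [:: o]), phi.
split; first by rewrite /alphabet card_option.
split; first exact: regular_letter_in.
split; first by move=> w [o _ ->].
split; first by case=> [i|]; [apply: reg_f | apply: regular_eps].
move=> L; split.
- by case=> i ->; exists [:: Some i]; split; [exists (Some i) | rewrite /= conc_eps].
- by case=> _ [[[i|] //= _ ->] ->]; exists i; rewrite /= conc_eps.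
Qed.

End FiniteRational.

Definition one_letter (S : finType) : lang S := fun u => size u = 1.

Lemma regular_one_letter (S : finType) : regular (@one_letter S).
Proof.
apply: regular_ext (regular_letter_in (@predT S)) _ => w.
by rewrite /one_letter; split=> [[a _ ->]|]; [|case: w => [|a [|]] //; exists a].
Qed.

Lemma subst_one_letter (D S : finType) (w : seq D) (x : seq S) :
  subst (fun _ => @one_letter S) w x <-> size x = size w.
Proof.
elim: w x => [|d w IHw] x /=; first by rewrite /eps_lang; split; [move-> | case: x].
split.
- by case=> u [v [-> [su /IHw sv]]]; rewrite size_cat su sv.
- by case: x => [|y x] //= [/IHw wx]; exists [:: y], x.
Qed.

Lemma alphabet_unit : alphabet unit.
Proof. by rewrite /alphabet card_unit. Qed.

Lemma star_one_letter_pow_size n (x : seq unit) :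
  star (subst (fun _ => @one_letter unit) (nseq n tt)) x -> x <> [::] -> n <= size x.
Proof.
case=> [[|u ws] [-> Hws]] //= _.
have /subst_one_letter su := Hws u (mem_head _ _).
by rewrite size_cat su size_nseq leq_addr.
Qed.

Lemma star_one_letter_pow_self n :
  star (subst (fun _ => @one_letter unit) (nseq n tt)) (nseq n tt).
Proof.
exists [:: nseq n tt]; split; first by rewrite /= cats0.
by move=> u; rewrite inE => /eqP ->; apply/subst_one_letter.
Qed.

Definition one_letter_powers : langset unit :=
  ratset (fun w : seq unit => 0 < size w) (fun _ => @one_letter unit).

Lemma rational_one_letter_powers : rational_set one_letter_powers.
Proof.
exists unit, (fun w : seq unit => 0 < size w), (fun _ => @one_letter unit).
split; first exact: alphabet_unit.
split.
  exists bool, false, (fun _ _ => true), id => w.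
  have acc w' : foldl (fun _ _ => true) true w' = true by elim: w'.
  by case: w => [|a w] //=; rewrite acc.
split; first by case.
by split=> // _; apply: regular_one_letter.
Qed.

Lemma not_rational_star_one_letter_powers : ~ rational_set (star_set one_letter_powers).
Proof.
case=> D [K [phi [_ [_ [_ [_ HR]]]]]].
have [n Hn] := subst_eps_short_word phi.
pose P := subst (fun _ => @one_letter unit) (nseq n.+1 tt).
have : star_set one_letter_powers (star P).
  by exists P; split=> //; exists (nseq n.+1 tt); rewrite size_nseq.
case/HR => w [_ E].
have w0 : subst phi w [::] by rewrite -E; apply: star_nil.
have wx : subst phi w (nseq n.+1 tt) by rewrite -E; apply: star_one_letter_pow_self.
have [//|y [wy y_n0 sy]] := Hn w _ w0 wx; rewrite -E in wy.
by have := leq_trans (star_one_letter_pow_size wy y_n0) sy; rewrite ltnn.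
Qed.

Lemma star_set_finite_rational (Sigma : finType) (R : langset Sigma) :
  rational_set R -> finite_langset R ->
  rational_set (star_set R) /\ finite_langset (star_set R).
Proof.
move=> ratR [n [f Rf]].
have star_setE L : star_set R L <-> exists i, L = star (f i).
  split=> [[L0 [/Rf [i ->] ->]]|[i ->]]; first by exists i.
  by exists (f i); split=> //; apply/Rf; exists i.
split; last by exists n, (fun i => star (f i)).
have [D [K [phi [alD [regK [nonK [reg_phi HR]]]]]]] :
    rational_set (fun L => exists i, L = star (f i)).
  apply: rational_set_finite_regular => i; apply: regular_star.
  by apply: rational_set_regular ratR _; apply/Rf; exists i.
by exists D, K, phi; do 4 split=> //; move=> L; rewrite star_setE.
Qed.

Lemma one_letter_star_not_subst (K' : lang unit) :
  ~ ratset K' (fun _ => @one_letter unit) (star (@one_letter unit)).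
Proof.
case=> w [_ E].
have /subst_one_letter w0 : subst (fun _ => @one_letter unit) w [::] by rewrite -E; apply: star_nil.
have /subst_one_letter w1 : subst (fun _ => @one_letter unit) w [:: tt].
  by rewrite -E; exists [:: [:: tt]]; split=> // u; rewrite inE => /eqP ->.
by rewrite -w0 in w1.
Qed.

Theorem proposition2 :
  (* (1) *)
  (exists (Sigma : finType) (R : langset Sigma),
     alphabet Sigma /\ rational_set R /\ ~ rational_set (star_set R)) /\
  (* (2) *)
  (forall (Sigma : finType) (R : langset Sigma),
     alphabet Sigma -> rational_set R -> finite_langset R ->
     rational_set (star_set R) /\ finite_langset (star_set R)) /\
  (* (3) *)
  (exists (Sigma Delta : finType) (phi : Delta -> lang Sigma) (K : lang Delta),
     alphabet Sigma /\ alphabet Delta /\ regular_subst phi /\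
     regular K /\ nonempty_words K /\ finite_langset (@ratset Delta Sigma K phi) /\
     ~ (exists K' : lang Delta,
          regular K' /\ nonempty_words K' /\
          forall L, star_set (@ratset Delta Sigma K phi) L <-> @ratset Delta Sigma K' phi L)).
Proof.
split.
  exists unit, one_letter_powers; split; first exact: alphabet_unit.
  by split; [apply: rational_one_letter_powers | apply: not_rational_star_one_letter_powers].
split=> [Sigma R _|]; first exact: star_set_finite_rational.
exists unit, unit, (fun _ => @one_letter unit), (@one_letter unit).
do 3 (split; first by [exact: alphabet_unit | move=> _; exact: regular_one_letter]).
split; first exact: regular_one_letter.
split; first by move=> w w1 w0; rewrite /one_letter w0 in w1.
split.
  exists 1, (fun _ => @one_letter unit) => L; split=> [[[|[] [|? ?]] [//= _ ->]]|[_ ->]].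
  - by exists ord0; rewrite conc_eps.
  - by exists [:: tt]; rewrite /= conc_eps.
case=> K' [_ [_ HK']]; apply: (@one_letter_star_not_subst K'); apply/HK'.
by exists (@one_letter unit); split=> //; exists [:: tt]; rewrite /= conc_eps.
Qed.
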